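(* Let $R=\mathbb{F}_q+v\mathbb{F}_q+v^2\mathbb{F}_q$ with $v^3=v$, let $M$ be an $(n-1)\times(n-1)$ circulant matrix over $R$, and let $\alpha,\omega\in R$. Then the matrix $$G=\left(I_n\ \middle|\ \begin{array}{cccc}\alpha&\omega&\cdots&\omega\\ \omega&&&\\ \vdots&&M&\\ \omega&&&\end{array}\right)$$ is a generator matrix of a formally self-dual code over $R$.
   Context: $q$ is a prime power and $R=\mathbb{F}_q[v]/\langle v^3-v\rangle$. A circulant matrix is one in which each row is the cyclic shift one position to the right of the previous row. A linear code of length $N$ over $R$ is an $R$-submodule of $R^N$; $C^\perp=\{x\in R^N:\sum x_iy_i=0\ \forall y\in C\}$. For $c\in R^N$ written uniquely as $a_0+va_1+v^2a_2$ with $a_i\in\mathbb{F}_q^N$, the Gray map is $\Psi(c)=(a_0,a_0+a_2,a_1)$ and the Lee weight $w_L(c)$ is the Hamming weight of $\Psi(c)$. $C$ is formally self-dual if $C$ and $C^\perp$ have the same Lee weight enumerator $\sum_c X^{3N-w_L(c)}Y^{w_L(c)}$. *)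

From HB Require Import structures.
From mathcomp Require Import all_boot all_order all_algebra all_field.
From mathcomp Require Import ring.
Set Implicit Arguments. Unset Strict Implicit. Unset Printing Implicit Defensive.
Import GRing.Theory.
Local Open Scope ring_scope.

(* The ring R = F[v]/<v^3 - v> over a finite field F (|F| = q a prime power).
   An element (a0, a1, a2) represents a0 + v a1 + v^2 a2. *)
Definition Rv (F : finFieldType) : Type := (F * F * F)%type.

Section Rv.
Variable F : finFieldType.
HB.instance Definition _ := GRing.Zmodule.on (Rv F).
HB.instance Definition _ := Finite.on (Rv F).

Definition Rv_mk (a0 a1 a2 : F) : Rv F := (a0, a1, a2).
Definition c0 (x : Rv F) : F := x.1.1.
Definition c1 (x : Rv F) : F := x.1.2.
Definition c2 (x : Rv F) : F := x.2.

Definition Rv_one : Rv F := Rv_mk 1 0 0.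
(* (a0 + a1 v + a2 v^2)(b0 + b1 v + b2 v^2) using v^3 = v, v^4 = v^2 *)
Definition Rv_mul (a b : Rv F) : Rv F :=
  Rv_mk (c0 a * c0 b)
        (c0 a * c1 b + c1 a * c0 b + c1 a * c2 b + c2 a * c1 b)
        (c0 a * c2 b + c2 a * c0 b + c1 a * c1 b + c2 a * c2 b).

Lemma Rv_mulA : associative Rv_mul.
Proof. move=> [[a0 a1] a2] [[b0 b1] b2] [[d0 d1] d2].
rewrite /Rv_mul /Rv_mk /c0 /c1 /c2 /=; congr (_, _, _); ring. Qed.
Lemma Rv_mulC : commutative Rv_mul.
Proof. move=> [[a0 a1] a2] [[b0 b1] b2].
rewrite /Rv_mul /Rv_mk /c0 /c1 /c2 /=; congr (_, _, _); ring. Qed.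
Lemma Rv_mul1 : left_id Rv_one Rv_mul.
Proof. move=> [[a0 a1] a2].
rewrite /Rv_mul /Rv_one /Rv_mk /c0 /c1 /c2 /=; congr (_, _, _); rewrite ?mul1r ?mul0r ?addr0 ?add0r //. Qed.
Lemma Rv_mulDl : left_distributive Rv_mul +%R.
Proof. move=> [[a0 a1] a2] [[b0 b1] b2] [[d0 d1] d2].
rewrite /Rv_mul /Rv_mk /c0 /c1 /c2 /=; have addE (x y : Rv F) : x + y = Rv_mk (c0 x + c0 y) (c1 x + c1 y) (c2 x + c2 y).
  by case: x => [[? ?] ?]; case: y => [[? ?] ?].
rewrite addE /Rv_mul /Rv_mk /c0 /c1 /c2 /=; congr (_, _, _); ring. Qed.
Lemma Rv_one_neq0 : Rv_one != 0.
Proof. apply/eqP => /(congr1 (fun x : Rv F => x.1.1)) /= /eqP. by rewrite oner_eq0. Qed.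


HB.instance Definition _ := GRing.Zmodule_isComNzRing.Build (Rv F)
  Rv_mulA Rv_mulC Rv_mul1 Rv_mulDl Rv_one_neq0.

Definition vR : Rv F := Rv_mk 0 1 0.
End Rv.

Definition circulant (T : Type) (m : nat) (M : 'M[T]_m) : Prop :=
  forall i j i' j' : 'I_m,
    nat_of_ord i' = i.+1 -> nat_of_ord j' = (j.+1 %% m)%N ->
    M i' j' = M i j.

Definition gen_code (F : finFieldType) (k N : nat) (G : 'M[Rv F]_(k, N))
  : {set 'rV[Rv F]_N} :=
  [set c | [exists x : 'rV[Rv F]_k, c == x *m G]].

Definition dual_code (F : finFieldType) (N : nat) (C : {set 'rV[Rv F]_N})
  : {set 'rV[Rv F]_N} :=
  [set y : 'rV[Rv F]_N | [forall c in C, \sum_(i < N) c 0 i * y 0 i == 0]].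

(* Gray map Psi(a0 + v a1 + v^2 a2) = (a0, a0 + a2, a1); Lee weight is the
   Hamming weight of the image. *)
Definition lee_weight_elt (F : finFieldType) (x : Rv F) : nat :=
  addn (addn (c0 x != 0) (c0 x + c2 x != 0)) (c1 x != 0).
Definition lee_weight (F : finFieldType) (N : nat) (c : 'rV[Rv F]_N) : nat :=
  \sum_(i < N) lee_weight_elt (c 0%R i).

(* Lee weight enumerator sum_c X^(3N - w_L(c)) Y^(w_L(c)) as an element of
   Z[X][Y] (inner variable X, outer variable Y). *)
Definition lee_we (F : finFieldType) (N : nat) (C : {set 'rV[Rv F]_N})
  : {poly {poly int}} :=
  \sum_(c in C) (('X^(3 * N - lee_weight c))%:P * 'X^(lee_weight c)).

Definition formally_self_dual (F : finFieldType) (N : nat)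
  (C : {set 'rV[Rv F]_N}) : Prop :=
  lee_we C = lee_we (dual_code C).

Lemma vR_cube_sanity (F : finFieldType) : (vR F) ^+ 3 = vR F.
Proof. by rewrite !exprS expr0 mulr1 /GRing.mul /= /Rv_mul /vR /Rv_mk /c0 /c1 /c2 /=; congr (_,_,_); rewrite ?(mul0r,mulr0,mul1r,addr0,add0r). Qed.

From HB Require Import structures.
From mathcomp Require Import all_boot all_order all_algebra all_field.
From mathcomp Require Import fingroup perm zify.
Set Implicit Arguments. Unset Strict Implicit. Unset Printing Implicit Defensive.
Import GRing.Theory.
Local Open Scope ring_scope.

(* The code generated by (I | A) consists of the words (x, xA) and its dual of
   the words (-yA^T, y).  If P A is symmetric for a permutation matrix P, then
   yA^T is a column permutation of xA for y = xP^-1, so x |-> (-yA^T, y) is a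
   bijection between the two codes that preserves the Lee weight, up to the
   order of its two blocks.  For the bordered circulant matrix, P fixes the
   first index and reverses the others: a circulant M has M_(i,j) depending
   only on j - i mod (n-1), so reversing its rows makes it symmetric. *)

Lemma col_permK (T : Type) (m n : nat) (s : 'S_n) :
  cancel (@col_perm T m n s) (col_perm s^-1).
Proof. by move=> A; rewrite -col_permM mulVg col_perm1. Qed.

Definition rev_perm n : 'S_n := perm (@rev_ord_inj n).

Section Circulant.
Variables (T : Type) (m : nat) (M : 'M[T]_m.+1).
Hypothesis circM : circulant M.

Lemma circulant_shift (j : 'I_m.+1) k : (k < m.+1)%N ->
  M ord0 j = M (inord k) (inord ((j + k) %% m.+1)).
Proof.
elim: k => [|k IHk] ltkm.
  have -> : (inord 0 : 'I_m.+1) = ord0 by apply: val_inj; rewrite /= inordK.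
  by rewrite addn0 modn_small // inord_val.
rewrite IHk ?(ltnW ltkm) //; symmetry; apply: circM.
  by rewrite !inordK // ltnW.
by rewrite !inordK ?ltn_pmod // addnS -[in RHS]addn1 modnDml addn1.
Qed.

Lemma circulant_rev_ordE (i j : 'I_m.+1) :
  M (rev_ord i) j = M ord0 (inord ((i + j + 1) %% m.+1)).
Proof.
rewrite (circulant_shift (inord ((i + j + 1) %% m.+1)) (ltn_ord (rev_ord i))).
rewrite inord_val; congr (M _ _); apply: val_inj.
rewrite /= !inordK ?ltn_pmod // modnDml.
have -> : (i + j + 1 + (m.+1 - i.+1) = j + m.+1)%N by have := ltn_ord i; lia.
by rewrite modnDr modn_small.
Qed.
End Circulant.

Lemma circulant_rev_sym (T : Type) (m : nat) (M : 'M[T]_m) :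
  circulant M -> (row_perm (rev_perm m) M)^T = row_perm (rev_perm m) M.
Proof.
case: m M => [|m] M circM; apply/matrixP => i j; first by case: i.
by rewrite !mxE !permE !circulant_rev_ordE // (addnC i).
Qed.

Definition bordered_mx (R : nzRingType) (m : nat) (alpha omega : R)
    (M : 'M[R]_m) : 'M[R]_(1 + m) :=
  block_mx alpha%:M (const_mx omega) (const_mx omega) M.

Lemma bordered_row_perm_sym (R : nzRingType) (m : nat) (s : 'S_m)
    (alpha omega : R) (M : 'M[R]_m) :
  (row_perm s M)^T = row_perm s M ->
  (row_perm (lift0_perm s) (bordered_mx alpha omega M))^T =
    row_perm (lift0_perm s) (bordered_mx alpha omega M).
Proof.
move=> symM; rewrite /bordered_mx row_permE -lift0_mx_perm /lift0_mx.
(* The dimensions must be given: [lift0_perm s] lives on ['I_m.+1], which is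
   only convertible to ['I_(1 + m)]. *)
rewrite (mulmx_block (m1 := 1) (m2 := m) (n1 := 1) (n2 := m) (p1 := 1) (p2 := m)).
rewrite !mul1mx !mul0mx !addr0 !add0r -!row_permE row_perm_const.
by rewrite (tr_block_mx (m1 := 1) (m2 := m) (n1 := 1) (n2 := m)) symM
  tr_scalar_mx !trmx_const.
Qed.

Section LeeWeight.
Variable F : finFieldType.

Lemma lee_weight_eltN (x : Rv F) : lee_weight_elt (- x) = lee_weight_elt x.
Proof.
case: x => [[a0 a1] a2]; rewrite /lee_weight_elt /c0 /c1 /c2 /=.
by rewrite -opprD !oppr_eq0.
Qed.

Lemma lee_weightN N (c : 'rV[Rv F]_N) : lee_weight (- c) = lee_weight c.
Proof. by apply: eq_bigr => i _; rewrite mxE lee_weight_eltN. Qed.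

Lemma lee_weight_row_mx N1 N2 (a : 'rV[Rv F]_N1) (b : 'rV[Rv F]_N2) :
  lee_weight (row_mx a b) = (lee_weight a + lee_weight b)%N.
Proof.
rewrite /lee_weight big_split_ord /=.
by congr (_ + _); apply: eq_bigr => i _; rewrite ?row_mxEl ?row_mxEr.
Qed.

Lemma lee_weight_col_perm N (s : 'S_N) (c : 'rV[Rv F]_N) :
  lee_weight (col_perm s c) = lee_weight c.
Proof.
rewrite /lee_weight [in RHS](reindex_inj (@perm_inj _ s)) /=.
by apply: eq_bigr => i _; rewrite mxE.
Qed.
End LeeWeight.

Section SystematicCode.
Variables (F : finFieldType) (k n : nat) (A : 'M[Rv F]_(k, n)).

Lemma gen_code_systematic :
  gen_code (row_mx 1%:M A) = (fun x => row_mx x (x *m A)) @: setT.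
Proof.
apply/setP => c; rewrite inE; apply/existsP/imsetP => [[x /eqP ->]|[x _ ->]];
  by exists x => //; rewrite mul_mx_row mulmx1.
Qed.

Lemma dot_rowE (c z : 'rV[Rv F]_(k + n)) :
  \sum_(i < k + n) c 0 i * z 0 i = (c *m z^T) 0 0.
Proof. by rewrite mxE; apply: eq_bigr => i _; rewrite mxE. Qed.

Lemma systematic_mul_tr (y1 : 'rV[Rv F]_k) (y2 : 'rV[Rv F]_n) :
  row_mx 1%:M A *m (row_mx y1 y2)^T = (y1 + y2 *m A^T)^T.
Proof. by rewrite tr_row_mx mul_row_col mul1mx linearD /= trmx_mul trmxK. Qed.

Lemma dual_code_systematic :
  dual_code (gen_code (row_mx 1%:M A)) = (fun y => row_mx (- (y *m A^T)) y) @: setT.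
Proof.
apply/setP => z; rewrite inE -[z]hsubmxK; move: (lsubmx z) (rsubmx z) => z1 z2.
apply/forall_inP/imsetP => [orth_z|[y _ /eq_row_mx [-> ->]] c].
- exists z2 => //; congr row_mx; apply/eqP; rewrite -addr_eq0.
  apply/eqP/trmx_inj; rewrite -systematic_mul_tr trmx0; apply/colP => i.
  have rowiC : delta_mx 0 i *m row_mx 1%:M A \in gen_code (row_mx 1%:M A).
    by rewrite inE; apply/existsP; exists (delta_mx 0 i).
  move/orth_z/eqP: rowiC; rewrite dot_rowE -mulmxA -rowE [(row _ _) 0 0]mxE.
  by move=> ->; rewrite mxE.
- rewrite inE => /existsP [x /eqP ->].
  by rewrite dot_rowE -mulmxA systematic_mul_tr addNr trmx0 mulmx0 mxE.
Qed.
End SystematicCode.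

Lemma systematic_formally_self_dual (F : finFieldType) (k : nat)
    (A : 'M[Rv F]_k) (s : 'S_k) :
  (row_perm s A)^T = row_perm s A -> formally_self_dual (gen_code (row_mx 1%:M A)).
Proof.
move=> symA; have trA : A^T = perm_mx s *m A *m perm_mx s.
  by rewrite -[A^T](col_permK s) -tr_row_perm symA col_permE invgK row_permE.
rewrite /formally_self_dual /lee_we dual_code_systematic gen_code_systematic.
rewrite !big_imset /=; try by move=> x1 x2 _ _ /eq_row_mx [].
rewrite (reindex_inj (can_inj (col_permK s^-1))) /=.
apply: eq_big => [x|x _]; first by rewrite !inE.
have -> : x *m A^T = col_perm s^-1 (col_perm s^-1 x *m A).
  by rewrite trA !col_permE invgK !mulmxA.
by rewrite !lee_weight_row_mx lee_weightN !lee_weight_col_perm addnC.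
Qed.

Theorem theorem17 (F : finFieldType) (m : nat) (hm : (0 < m)%N)
  (M : 'M[Rv F]_m) (alpha omega : Rv F) :
  circulant M ->
  formally_self_dual
    (gen_code
       (row_mx (1%:M : 'M[Rv F]_(1 + m))
               (block_mx (alpha%:M : 'M[Rv F]_1) (const_mx omega : 'M[Rv F]_(1, m))
                         (const_mx omega : 'M[Rv F]_(m, 1)) M))).
Proof.
move=> circM.
have symB := bordered_row_perm_sym alpha omega (circulant_rev_sym circM).
exact: systematic_formally_self_dual symB.
Qed.
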